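(* Let $\mathcal{Q}$ be either the category of unital involutive quantales with unital involutive homomorphisms or the category of strong involutive quantales with strong involutive homomorphisms. Then the full subcategory of compact regular locales is closed under colimits in $\mathcal{Q}$.
   Context: A quantale is a complete lattice with an associative multiplication distributing over arbitrary joins in both variables; $1$ is its top. It is unital if it has a multiplicative unit, strong if $1\cdot 1=1$. An involutive quantale has an involution $^*$ with $a^{**}=a$, $(a\cdot b)^*=b^*\cdot a^*$, $(\bigvee a_i)^*=\bigvee a_i^*$. Homomorphisms preserve joins and multiplication; unital ones preserve the unit, strong ones the top, involutive ones the involution. A locale is a complete lattice satisfying $a\wedge\bigvee_i b_i=\bigvee_i(a\wedge b_i)$, regarded as a unital involutive quantale with multiplication $\wedge$, unit the top, trivial involution. A locale is compact if whenever $1=\bigvee S$ then $1=\bigvee F$ for some finite $F\subseteq S$; it is regular if every $a$ equals $\bigvee\{a': a'\prec a\}$, where $a'\prec a$ means there is $b$ with $a'\wedge b=0$ and $a\vee b=1$. *)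

From Stdlib Require Import List.

(* All quantales here
   are involutive, since both categories in the statement are involutive. *)
Record quantale := Quantale {
  car :> Type;
  le : car -> car -> Prop;
  sup : (car -> Prop) -> car;
  mul : car -> car -> car;
  inv : car -> car;
  le_refl : forall a, le a a;
  le_trans : forall a b c, le a b -> le b c -> le a c;
  le_antisym : forall a b, le a b -> le b a -> a = b;
  sup_ub : forall (S : car -> Prop) a, S a -> le a (sup S);
  sup_least : forall (S : car -> Prop) b, (forall a, S a -> le a b) -> le (sup S) b;
  mul_assoc : forall a b c, mul (mul a b) c = mul a (mul b c);
  mul_sup_l : forall a (S : car -> Prop),
      mul a (sup S) = sup (fun y => exists s, S s /\ y = mul a s);
  mul_sup_r : forall a (S : car -> Prop),
      mul (sup S) a = sup (fun y => exists s, S s /\ y = mul s a);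
  inv_inv : forall a, inv (inv a) = a;
  inv_mul : forall a b, inv (mul a b) = mul (inv b) (inv a);
  inv_sup : forall (S : car -> Prop),
      inv (sup S) = sup (fun y => exists s, S s /\ y = inv s)
}.

Arguments le {q}.
Arguments sup {q}.
Arguments mul {q}.
Arguments inv {q}.

Definition top (Q : quantale) : Q := sup (fun _ : Q => True).
Definition bot (Q : quantale) : Q := sup (fun _ : Q => False).
Definition join {Q : quantale} (a b : Q) : Q := sup (fun x => x = a \/ x = b).
Definition meet {Q : quantale} (a b : Q) : Q :=
  sup (fun x => le x a /\ le x b).

Definition img {A B : Type} (f : A -> B) (S : A -> Prop) : B -> Prop :=
  fun y => exists x, S x /\ y = f x.

Definition is_unit (Q : quantale) (e : Q) : Prop :=
  forall a : Q, mul e a = a /\ mul a e = a.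

Definition unital (Q : quantale) : Prop := exists e : Q, is_unit Q e.
Definition strong (Q : quantale) : Prop := mul (top Q) (top Q) = top Q.

Definition inv_qhom (Q R : quantale) (f : Q -> R) : Prop :=
  (forall S : Q -> Prop, f (sup S) = sup (img f S)) /\
  (forall a b : Q, f (mul a b) = mul (f a) (f b)) /\
  (forall a : Q, f (inv a) = inv (f a)).

Definition unital_hom (Q R : quantale) (f : Q -> R) : Prop :=
  forall e e', is_unit Q e -> is_unit R e' -> f e = e'.
Definition strong_hom (Q R : quantale) (f : Q -> R) : Prop :=
  f (top Q) = top R.

Inductive qcat := UnitalInv | StrongInv.

Definition cat_obj (k : qcat) (Q : quantale) : Prop :=
  match k with UnitalInv => unital Q | StrongInv => strong Q end.

Definition cat_hom (k : qcat) (Q R : quantale) (f : Q -> R) : Prop :=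
  inv_qhom Q R f /\
  match k with UnitalInv => unital_hom Q R f | StrongInv => strong_hom Q R f end.

Record diagram (k : qcat) := Diagram {
  J_obj : Type;
  J_hom : J_obj -> J_obj -> Type;
  J_id : forall i, J_hom i i;
  J_comp : forall i j l, J_hom j l -> J_hom i j -> J_hom i l;
  J_id_l : forall i j (u : J_hom i j), J_comp i j j (J_id j) u = u;
  J_id_r : forall i j (u : J_hom i j), J_comp i i j u (J_id i) = u;
  J_assoc : forall i j l m (w : J_hom l m) (v : J_hom j l) (u : J_hom i j),
      J_comp i l m w (J_comp i j l v u) = J_comp i j m (J_comp j l m w v) u;
  D_obj : J_obj -> quantale;
  D_obj_in : forall i, cat_obj k (D_obj i);
  D_map : forall i j, J_hom i j -> D_obj i -> D_obj j;
  D_map_hom : forall i j (u : J_hom i j), cat_hom k (D_obj i) (D_obj j) (D_map i j u);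
  D_map_id : forall i x, D_map i i (J_id i) x = x;
  D_map_comp : forall i j l (v : J_hom j l) (u : J_hom i j) x,
      D_map i l (J_comp i j l v u) x = D_map j l v (D_map i j u x)
}.

Arguments J_obj {k}.
Arguments J_hom {k}.
Arguments D_obj {k}.
Arguments D_map {k} d {i j}.

Definition is_cocone {k} (d : diagram k) (C : quantale)
    (c : forall i, D_obj d i -> C) : Prop :=
  cat_obj k C /\
  (forall i, cat_hom k (D_obj d i) C (c i)) /\
  (forall i j (u : J_hom d i j) x, c j (D_map d u x) = c i x).

Definition is_colimit {k} (d : diagram k) (C : quantale)
    (c : forall i, D_obj d i -> C) : Prop :=
  is_cocone d C c /\
  forall (C' : quantale) (c' : forall i, D_obj d i -> C'),
    is_cocone d C' c' ->
    (exists h : C -> C', cat_hom k C C' h /\ forall i x, h (c i x) = c' i x) /\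
    (forall h1 h2 : C -> C',
       cat_hom k C C' h1 -> (forall i x, h1 (c i x) = c' i x) ->
       cat_hom k C C' h2 -> (forall i x, h2 (c i x) = c' i x) ->
       forall y, h1 y = h2 y).

(* A quantale "is a locale" (regarded as unital involutive quantale) when its
   multiplication is binary meet, its involution is trivial, and its unit is
   the top. *)
Definition is_locale (Q : quantale) : Prop :=
  (forall a b : Q, mul a b = meet a b) /\
  (forall a : Q, inv a = a) /\
  is_unit Q (top Q).

Definition compact (Q : quantale) : Prop :=
  forall S : Q -> Prop, top Q = sup S ->
    exists F : list Q, (forall x, In x F -> S x) /\
                       top Q = sup (fun x => In x F).

Definition well_inside {Q : quantale} (a' a : Q) : Prop :=
  exists b : Q, meet a' b = bot Q /\ join a b = top Q.

Definition regular (Q : quantale) : Prop :=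
  forall a : Q, a = sup (fun a' => well_inside a' a).

Definition compact_regular_locale (Q : quantale) : Prop :=
  is_locale Q /\ compact Q /\ regular Q.

(* Let u be the element of the colimit C that morphisms must preserve (its unit,
   resp. its top). C is generated by u and the images c_i(D_i): the inclusion of any
   subquantale containing them splits by the universal property. So it suffices to
   check closure properties on generators. Every element lies below u and is fixed by
   multiplication with u, whence u is the top and a unit. The complements witnessing
   regularity of the D_i make the images of any two D_i commute, so C is commutative,
   and then idempotent and self-adjoint: a locale. Regularity is inherited because
   well-insideness is stable under joins and products and preserved by the c_i.
   For compactness, sending a in D_i to the ideal generated by the c_i(a') with a'
   well inside a gives a cocone into the locale of ideals of C (this is where
   compactness of the D_i is used); the mediating map sends x into the principal
   ideal of x, and evaluated at top = sup S it yields a finite subcover. *)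

From Stdlib Require Import List ProofIrrelevance FunctionalExtensionality PropExtensionality.

Definition sup_preserving {Q R : quantale} (f : Q -> R) : Prop :=
  forall S : Q -> Prop, f (sup S) = sup (img f S).

Definition lsup {Q : quantale} (l : list Q) : Q := sup (fun z => In z l).

Definition commute {Q : quantale} (x y : Q) : Prop := mul x y = mul y x.

Section Lattice.
Variable Q : quantale.
Implicit Types (a b c x y : Q) (S T : Q -> Prop) (l : list Q).

Lemma sup_ext S T : (forall x, S x <-> T x) -> sup S = sup T.
Proof.
  intro H; apply le_antisym; apply sup_least; intros a Ha; apply sup_ub, H, Ha.
Qed.

Lemma sup_img_img {A B : Type} (f : A -> B) (g : B -> Q) (S : A -> Prop) :
  sup (img g (img f S)) = sup (img (fun t => g (f t)) S).
Proof.
  apply sup_ext; intro y; split.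
  - intros [z [[t [Ht ->]] ->]]; exists t; auto.
  - intros [t [Ht ->]]; exists (f t); split; [exists t |]; auto.
Qed.

Lemma bot_le a : le (bot Q) a.
Proof. apply sup_least; intros x []. Qed.

Lemma le_top a : le a (top Q).
Proof. apply sup_ub; exact I. Qed.

Lemma le_join_l a b : le a (join a b).
Proof. apply sup_ub; auto. Qed.

Lemma le_join_r a b : le b (join a b).
Proof. apply sup_ub; auto. Qed.

Lemma join_le a b c : le a c -> le b c -> le (join a b) c.
Proof. intros Ha Hb; apply sup_least; intros x [-> | ->]; assumption. Qed.

Lemma join_bot_r a : join a (bot Q) = a.
Proof.
  apply le_antisym; [apply join_le; [apply le_refl | apply bot_le] | apply le_join_l].
Qed.

Lemma lsup_le l b : (forall x, In x l -> le x b) -> le (lsup l) b.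
Proof. apply sup_least. Qed.

Lemma lsup_ub l x : In x l -> le x (lsup l).
Proof. apply (sup_ub _ (fun z => In z l)). Qed.

Lemma lsup_nil : lsup nil = bot Q.
Proof. apply sup_ext; simpl; tauto. Qed.

Lemma lsup_cons a l : lsup (a :: l) = join a (lsup l).
Proof.
  apply le_antisym.
  - apply lsup_le; intros x [<- | Hx]; [apply le_join_l |].
    eapply le_trans; [apply lsup_ub, Hx | apply le_join_r].
  - apply join_le; [apply lsup_ub; left; reflexivity |].
    apply lsup_le; intros x Hx; apply lsup_ub; right; exact Hx.
Qed.

Lemma lsup_app l1 l2 : lsup (l1 ++ l2) = join (lsup l1) (lsup l2).
Proof.
  induction l1 as [| a l1 IH]; simpl.
  - rewrite lsup_nil; apply le_antisym.
    + apply le_join_r.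
    + apply join_le; [apply bot_le | apply le_refl].
  - rewrite !lsup_cons, IH; apply le_antisym; repeat apply join_le;
      eauto using le_trans, le_join_l, le_join_r.
Qed.
End Lattice.

Section SupPreserving.
Variables (Q R : quantale) (f : Q -> R).
Hypothesis f_sup : sup_preserving f.

Lemma sup_preserving_mono a b : le a b -> le (f a) (f b).
Proof.
  intro Hab.
  assert (E : join a b = b).
  { apply le_antisym; [apply join_le; [exact Hab | apply le_refl] | apply le_join_r]. }
  rewrite <- E; unfold join; rewrite f_sup; apply sup_ub; exists a; auto.
Qed.

Lemma sup_preserving_bot : f (bot Q) = bot R.
Proof. unfold bot; rewrite f_sup; apply sup_ext; firstorder. Qed.

Lemma sup_preserving_join a b : f (join a b) = join (f a) (f b).
Proof.
  unfold join; rewrite f_sup; apply sup_ext; intro y; split.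
  - intros [x [[-> | ->] ->]]; auto.
  - intros [-> | ->]; [exists a | exists b]; auto.
Qed.

Lemma sup_preserving_lsup l : f (lsup l) = lsup (map f l).
Proof.
  unfold lsup; rewrite f_sup; apply sup_ext; intro y.
  rewrite in_map_iff; firstorder.
Qed.
End SupPreserving.

Section Quantale.
Variable Q : quantale.
Implicit Types (a b c x y : Q) (S T : Q -> Prop).

Lemma mul_l_sup_preserving a : sup_preserving (mul a).
Proof. exact (mul_sup_l Q a). Qed.

Lemma mul_r_sup_preserving a : sup_preserving (fun x => mul x a).
Proof. exact (mul_sup_r Q a). Qed.

Lemma inv_sup_preserving : sup_preserving (@inv Q).
Proof. exact (inv_sup Q). Qed.

Lemma mul_le_mono_l a b c : le a b -> le (mul c a) (mul c b).
Proof. apply sup_preserving_mono, mul_l_sup_preserving. Qed.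

Lemma mul_le_mono_r a b c : le a b -> le (mul a c) (mul b c).
Proof. apply (sup_preserving_mono _ _ _ (mul_r_sup_preserving c)). Qed.

Lemma mul_le_mono a b c d : le a b -> le c d -> le (mul a c) (mul b d).
Proof.
  intros; eapply le_trans; [apply mul_le_mono_r | apply mul_le_mono_l]; eassumption.
Qed.

Lemma inv_le_mono a b : le a b -> le (inv a) (inv b).
Proof. apply sup_preserving_mono, inv_sup_preserving. Qed.

Lemma mul_sup_le S T z : (forall s t, S s -> T t -> le (mul s t) z) ->
  le (mul (sup S) (sup T)) z.
Proof.
  intro H; rewrite mul_sup_r; apply sup_least; intros w [s [Hs ->]].
  rewrite mul_sup_l; apply sup_least; intros w [t [Ht ->]]; auto.
Qed.

Lemma inv_top : inv (top Q) = top Q.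
Proof.
  apply le_antisym; [apply le_top |].
  rewrite <- (inv_inv Q (top Q)) at 1; apply inv_le_mono, le_top.
Qed.

Lemma is_unit_unique e e' : is_unit Q e -> is_unit Q e' -> e = e'.
Proof. intros He He'; rewrite <- (proj2 (He' e)); apply He. Qed.

Lemma inv_unit e : is_unit Q e -> inv e = e.
Proof.
  intro He; apply is_unit_unique; [intro a | exact He].
  rewrite <- (inv_inv Q a) at 1 3; rewrite <- !inv_mul.
  rewrite (proj1 (He (inv a))), (proj2 (He (inv a))), inv_inv; auto.
Qed.

Lemma mul_join_l a b c : mul a (join b c) = join (mul a b) (mul a c).
Proof. apply sup_preserving_join, mul_l_sup_preserving. Qed.

Lemma mul_join_r a b c : mul (join a b) c = join (mul a c) (mul b c).
Proof. apply (sup_preserving_join _ _ _ (mul_r_sup_preserving c)). Qed.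

Lemma commute_sup S y : (forall s, S s -> commute s y) -> commute (sup S) y.
Proof.
  intro H; unfold commute; rewrite mul_sup_r, mul_sup_l.
  apply sup_ext; intro w; split; intros [s [Hs ->]]; exists s;
    split; auto; [| symmetry]; apply H, Hs.
Qed.

Lemma commute_mul x1 x2 y : commute x1 y -> commute x2 y -> commute (mul x1 x2) y.
Proof.
  unfold commute; intros H1 H2.
  rewrite mul_assoc, H2, <- mul_assoc, H1, mul_assoc; reflexivity.
Qed.

Lemma commute_inv x y : commute x (inv y) -> commute (inv x) y.
Proof.
  unfold commute; intro H; apply (f_equal inv) in H.
  rewrite !inv_mul, inv_inv in H; symmetry; exact H.
Qed.

Lemma commute_unit e x : is_unit Q e -> commute e x.
Proof. intro He; unfold commute; rewrite (proj1 (He x)), (proj2 (He x)); reflexivity. Qed.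
End Quantale.

Section TopUnit.
Variable Q : quantale.
Hypothesis top_unit : is_unit Q (top Q).
Implicit Types (a b x y : Q).

Lemma mul_le_l a b : le (mul a b) a.
Proof.
  rewrite <- (proj2 (top_unit a)) at 2; apply mul_le_mono_l, le_top.
Qed.

Lemma mul_le_r a b : le (mul a b) b.
Proof.
  rewrite <- (proj1 (top_unit b)) at 2; apply mul_le_mono_r, le_top.
Qed.

Lemma complement_mul_l a x s : mul s a = bot Q -> join x s = top Q -> mul x a = a.
Proof.
  intros Hsa Hxs; rewrite <- (proj1 (top_unit a)) at 2.
  rewrite <- Hxs, mul_join_r, Hsa, join_bot_r; reflexivity.
Qed.

Lemma complement_mul_r a y q : mul a q = bot Q -> join y q = top Q -> mul a y = a.
Proof.
  intros Haq Hyq; rewrite <- (proj2 (top_unit a)) at 2.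
  rewrite <- Hyq, mul_join_l, Haq, join_bot_r; reflexivity.
Qed.

(* The left complement [s] of [x'] lets [x] act trivially on [p x'] from the left,
   the right complement [q] of [p] lets [y] act trivially on it from the right. *)
Lemma mul_swap_le_of_complements p x' x y s q :
  mul s x' = bot Q -> join x s = top Q -> mul p q = bot Q -> join y q = top Q ->
  le (mul p x') (mul x y).
Proof.
  intros Hsx Hxs Hpq Hyq.
  assert (Hleft : mul x (mul p x') = mul p x').
  { apply complement_mul_l with s; [| exact Hxs].
    apply le_antisym; [| apply bot_le].
    eapply le_trans; [apply mul_le_mono_l, mul_le_mono_r, (le_top _ p) |].
    rewrite (proj1 (top_unit x')), Hsx; apply le_refl. }
  assert (Hright : mul (mul p x') y = mul p x').
  { apply complement_mul_r with q; [| exact Hyq].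
    apply le_antisym; [| apply bot_le].
    eapply le_trans; [apply mul_le_mono_r, mul_le_mono_l, (le_top _ x') |].
    rewrite (proj2 (top_unit p)), Hpq; apply le_refl. }
  rewrite <- Hright, <- Hleft; apply mul_le_mono_r, mul_le_l.
Qed.

Lemma is_locale_of_idempotent :
  (forall x, mul x x = x) -> (forall x, inv x = x) -> is_locale Q.
Proof.
  intros Hidem Hinv; split; [| split; [exact Hinv | exact top_unit]].
  intros a b; apply le_antisym.
  - apply sup_ub; split; [apply mul_le_l | apply mul_le_r].
  - apply sup_least; intros z [Hza Hzb]; rewrite <- (Hidem z); apply mul_le_mono; assumption.
Qed.
End TopUnit.

Definition is_ideal {Q : quantale} (I : Q -> Prop) : Prop :=
  I (bot Q) /\ (forall x y, le x y -> I y -> I x) /\ (forall x y, I x -> I y -> I (join x y)).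

Section Ideal.
Variable Q : quantale.

Lemma ideal_lsup (I : Q -> Prop) (l : list Q) : is_ideal I -> (forall z, In z l -> I z) -> I (lsup l).
Proof.
  intros [Ibot [_ Ijoin]]; induction l as [| a l IH]; intro Hl.
  - rewrite lsup_nil; exact Ibot.
  - rewrite lsup_cons; apply Ijoin; [apply Hl; left | apply IH; intros; apply Hl; right]; auto.
Qed.

Lemma ideal_preimage (R : quantale) (f : R -> Q) (I : Q -> Prop) :
  sup_preserving f -> is_ideal I -> is_ideal (fun x => I (f x)).
Proof.
  intros Hf [Ibot [Idown Ijoin]]; split; [| split].
  - rewrite (sup_preserving_bot _ _ _ Hf); exact Ibot.
  - intros x y Hxy; apply Idown, (sup_preserving_mono _ _ _ Hf), Hxy.
  - intros x y Hx Hy; rewrite (sup_preserving_join _ _ _ Hf); auto.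
Qed.
End Ideal.

Section Locale.
Variable L : quantale.
Hypothesis HL : is_locale L.
Implicit Types (a b x y z : L).

Let top_unit : is_unit L (top L) := proj2 (proj2 HL).

Lemma le_mul z a b : le z a -> le z b -> le z (mul a b).
Proof. rewrite (proj1 HL); intros; apply sup_ub; auto. Qed.

Lemma locale_mul_comm a b : commute a b.
Proof.
  apply le_antisym; apply le_mul; auto using mul_le_l, mul_le_r.
Qed.

Lemma locale_mul_idem a : mul a a = a.
Proof. apply le_antisym; [apply mul_le_l | apply le_mul]; auto using le_refl. Qed.

Lemma well_inside_iff a' a :
  well_inside a' a <-> exists b, mul a' b = bot L /\ join a b = top L.
Proof. unfold well_inside; setoid_rewrite (proj1 HL); tauto. Qed.

Lemma well_inside_le a' a : well_inside a' a -> le a' a.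
Proof.
  intros [b [Hb Hab]]%well_inside_iff.
  rewrite <- (complement_mul_r _ top_unit a' a b Hb Hab); apply mul_le_r, top_unit.
Qed.

Lemma well_inside_mono x a' a y : le x a' -> well_inside a' a -> le a y -> well_inside x y.
Proof.
  intros Hx [b [Hb Hab]]%well_inside_iff Hy; apply well_inside_iff; exists b; split.
  - apply le_antisym; [rewrite <- Hb; apply mul_le_mono_r, Hx | apply bot_le].
  - apply le_antisym; [apply le_top | rewrite <- Hab].
    apply join_le; [eapply le_trans; [exact Hy |] |]; auto using le_join_l, le_join_r.
Qed.

Lemma well_inside_bot a : well_inside (bot L) a.
Proof.
  apply well_inside_iff; exists (top L); split.
  - apply top_unit.
  - apply le_antisym; [apply le_top | apply le_join_r].
Qed.

Lemma well_inside_top : well_inside (top L) (top L).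
Proof.
  apply well_inside_iff; exists (bot L); split.
  - apply le_antisym; [apply mul_le_r, top_unit | apply bot_le].
  - apply join_bot_r.
Qed.

Lemma well_inside_mul x1 y1 x2 y2 :
  well_inside x1 y1 -> well_inside x2 y2 -> well_inside (mul x1 x2) (mul y1 y2).
Proof.
  intros [b1 [Hb1 Hyb1]]%well_inside_iff [b2 [Hb2 Hyb2]]%well_inside_iff.
  apply well_inside_iff; exists (join b1 b2); split.
  - apply le_antisym; [| apply bot_le]; rewrite mul_join_l; apply join_le.
    + rewrite <- Hb1; apply mul_le_mono_r, mul_le_l, top_unit.
    + rewrite <- Hb2; apply mul_le_mono_r, mul_le_r, top_unit.
  - apply le_antisym; [apply le_top |].
    rewrite <- (locale_mul_idem (top L)), <- Hyb1 at 1; rewrite <- Hyb2.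
    rewrite !mul_join_l, !mul_join_r; repeat apply join_le;
      eauto 6 using le_trans, le_join_l, le_join_r, mul_le_l, mul_le_r.
Qed.

Lemma well_inside_join x1 x2 a :
  well_inside x1 a -> well_inside x2 a -> well_inside (join x1 x2) a.
Proof.
  intros [b1 [Hb1 Hab1]]%well_inside_iff [b2 [Hb2 Hab2]]%well_inside_iff.
  apply well_inside_iff; exists (mul b1 b2); split.
  - apply le_antisym; [| apply bot_le]; rewrite mul_join_r; apply join_le.
    + rewrite <- Hb1, <- mul_assoc; apply mul_le_l, top_unit.
    + rewrite <- Hb2; apply mul_le_mono_l, mul_le_r, top_unit.
  - apply le_antisym; [apply le_top |].
    rewrite <- (locale_mul_idem (top L)), <- Hab1 at 1; rewrite <- Hab2.
    rewrite !mul_join_l, !mul_join_r; repeat apply join_le;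
      eauto 6 using le_trans, le_join_l, le_join_r, mul_le_l, mul_le_r.
Qed.

(* Ideal form of: what lies well inside [sup T] lies below a finite join of
   elements each well inside a member of [T]. *)
Lemma well_inside_sup_ideal (HC : compact L) (HR : regular L) (I T : L -> Prop) :
  is_ideal I -> (forall t z, T t -> well_inside z t -> I z) ->
  forall y, well_inside y (sup T) -> I y.
Proof.
  intros HI HT y [b [Hyb Hb]]%well_inside_iff.
  set (U := fun z => z = b \/ exists t, T t /\ well_inside z t).
  assert (Hcover : top L = sup U).
  { apply le_antisym; [rewrite <- Hb; apply join_le | apply le_top].
    - apply sup_least; intros t Ht; rewrite (HR t).
      apply sup_least; intros z Hz; apply sup_ub; right; eauto.
    - apply sup_ub; left; reflexivity. }
  destruct (HC U Hcover) as [F [HFU HF]].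
  assert (Ey : y = lsup (map (mul y) F)).
  { rewrite <- (sup_preserving_lsup _ _ _ (mul_l_sup_preserving L y)).
    unfold lsup; rewrite <- HF; symmetry; apply top_unit. }
  rewrite Ey; apply ideal_lsup; [exact HI |].
  intros w [z [<- Hz]]%in_map_iff.
  destruct (HFU z Hz) as [-> | [t [Ht Hzt]]].
  - rewrite Hyb; apply HI.
  - apply (proj1 (proj2 HI)) with z; [apply mul_le_r, top_unit | exact (HT t z Ht Hzt)].
Qed.
End Locale.

Section LocaleHom.
Variables (L Q : quantale) (f : L -> Q).
Hypotheses (HL : is_locale L) (Hf : inv_qhom L Q f) (Hf_top : f (top L) = top Q).

Lemma hom_well_inside_complement a' a : well_inside a' a ->
  exists s, mul s (f a') = bot Q /\ mul (f a') s = bot Q /\ join (f a) s = top Q.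
Proof.
  intros [b [Hb Hab]]%(well_inside_iff _ HL); exists (f b).
  rewrite <- !(proj1 (proj2 Hf)), (locale_mul_comm _ HL b), Hb,
    <- (sup_preserving_join _ _ _ (proj1 Hf)), Hab, (sup_preserving_bot _ _ _ (proj1 Hf)).
  auto.
Qed.

Lemma hom_well_inside (HQ : is_locale Q) a' a : well_inside a' a -> well_inside (f a') (f a).
Proof.
  intros (s & _ & Hs & Hjoin)%hom_well_inside_complement.
  apply (well_inside_iff _ HQ); eauto.
Qed.

Lemma hom_regular (HR : regular L) a : f a = sup (img f (fun a' => well_inside a' a)).
Proof. rewrite (HR a) at 1; apply Hf. Qed.
End LocaleHom.

(* The element that morphisms of [k] must preserve: the unit, resp. the top. *)
Definition cat_unit (k : qcat) (Q : quantale) (e : Q) : Prop :=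
  match k with UnitalInv => is_unit Q e | StrongInv => e = top Q end.

Section CategoryUnit.
Variable k : qcat.
Implicit Types (Q R S : quantale).

Lemma cat_obj_has_unit Q : cat_obj k Q -> exists e, cat_unit k Q e.
Proof. destruct k; simpl; eauto. Qed.

Lemma cat_unit_unique Q (e e' : Q) : cat_unit k Q e -> cat_unit k Q e' -> e = e'.
Proof. destruct k; simpl; [apply is_unit_unique | congruence]. Qed.

Lemma cat_unit_idem Q (e : Q) : cat_obj k Q -> cat_unit k Q e -> mul e e = e.
Proof. destruct k; simpl; [intros _ He; apply He | intros HQ ->; exact HQ]. Qed.

Lemma cat_obj_of_unit Q (e : Q) : cat_unit k Q e -> mul e e = e -> cat_obj k Q.
Proof. destruct k; simpl; [intros He _; exists e; exact He | intros -> H; exact H]. Qed.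

Lemma inv_cat_unit Q (e : Q) : cat_unit k Q e -> inv e = e.
Proof. destruct k; simpl; [apply inv_unit | intros ->; apply inv_top]. Qed.

Lemma locale_cat_unit L : is_locale L -> cat_unit k L (top L).
Proof. destruct k; simpl; [intro HL; apply HL | reflexivity]. Qed.

Lemma cat_hom_unit Q R f (e : Q) (e' : R) :
  cat_hom k Q R f -> cat_unit k Q e -> cat_unit k R e' -> f e = e'.
Proof. destruct k; simpl; intros [_ Hf]; [apply Hf | intros -> ->; exact Hf]. Qed.

Lemma cat_homI Q R f : inv_qhom Q R f ->
  (forall e e', cat_unit k Q e -> cat_unit k R e' -> f e = e') -> cat_hom k Q R f.
Proof. intros Hf Hu; split; [exact Hf |]; destruct k; [exact Hu | apply Hu; reflexivity]. Qed.

Lemma cat_hom_id Q : cat_hom k Q Q (fun x => x).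
Proof.
  apply cat_homI; [| apply cat_unit_unique].
  split; [intro T; apply sup_ext; unfold img; firstorder congruence | auto].
Qed.

Lemma cat_hom_comp Q R S f g : cat_obj k R ->
  cat_hom k Q R f -> cat_hom k R S g -> cat_hom k Q S (fun x => g (f x)).
Proof.
  intros HR Hf Hg; destruct (cat_obj_has_unit R HR) as [u Hu].
  apply cat_homI.
  - destruct Hf as [[Fsup [Fmul Finv]] _], Hg as [[Gsup [Gmul Ginv]] _].
    split; [intro T; rewrite Fsup, Gsup; apply sup_img_img | split; congruence].
  - intros e e' He He'; rewrite (cat_hom_unit _ _ _ _ _ Hf He Hu).
    exact (cat_hom_unit _ _ _ _ _ Hg Hu He').
Qed.
End CategoryUnit.

Section Subquantale.
Variables (Q : quantale) (P : Q -> Prop).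
Hypotheses (P_sup : forall S, (forall x, S x -> P x) -> P (sup S))
  (P_mul : forall x y, P x -> P y -> P (mul x y))
  (P_inv : forall x, P x -> P (inv x)).

Definition sub_elt : Type := {x : Q | P x}.

Lemma sub_eq (a b : sub_elt) : proj1_sig a = proj1_sig b -> a = b.
Proof. destruct a, b; apply subset_eq_compat. Qed.

Lemma sub_img_P (S : sub_elt -> Prop) x : img (@proj1_sig Q P) S x -> P x.
Proof. intros [a [_ ->]]; exact (proj2_sig a). Qed.

Definition sub_sup (S : sub_elt -> Prop) : sub_elt :=
  exist P (sup (img (@proj1_sig Q P) S)) (P_sup _ (sub_img_P S)).

Definition sub_mul (a b : sub_elt) : sub_elt :=
  exist P (mul (proj1_sig a) (proj1_sig b)) (P_mul _ _ (proj2_sig a) (proj2_sig b)).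

Definition sub_inv (a : sub_elt) : sub_elt :=
  exist P (inv (proj1_sig a)) (P_inv _ (proj2_sig a)).

Definition subquantale : quantale.
Proof.
  refine {| car := sub_elt; le a b := le (proj1_sig a) (proj1_sig b);
            sup := sub_sup; mul := sub_mul; inv := sub_inv |}.
  - intro a; apply le_refl.
  - intros a b c; apply le_trans.
  - intros a b Hab Hba; apply sub_eq, le_antisym; assumption.
  - intros S a Ha; apply sup_ub; exists a; auto.
  - intros S b Hb; apply sup_least; intros x [a [Ha ->]]; auto.
  - intros a b c; apply sub_eq, mul_assoc.
  - intros a S; apply sub_eq; simpl; rewrite mul_l_sup_preserving, sup_img_img.
    exact (eq_sym (sup_img_img _ (sub_mul a) _ S)).
  - intros a S; apply sub_eq; simpl; rewrite mul_r_sup_preserving, sup_img_img.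
    exact (eq_sym (sup_img_img _ (fun s => sub_mul s a) _ S)).
  - intro a; apply sub_eq, inv_inv.
  - intros a b; apply sub_eq, inv_mul.
  - intro S; apply sub_eq; simpl; rewrite inv_sup_preserving, sup_img_img.
    exact (eq_sym (sup_img_img _ sub_inv _ S)).
Defined.

Lemma sub_incl_hom : inv_qhom subquantale Q (@proj1_sig Q P).
Proof. split; [| split]; reflexivity. Qed.

Definition sub_corestrict {R : quantale} (f : R -> Q) (HP : forall x, P (f x)) :
  R -> subquantale := fun x => exist P (f x) (HP x).

Lemma sub_corestrict_hom (R : quantale) (f : R -> Q) (HP : forall x, P (f x)) :
  inv_qhom R Q f -> inv_qhom R subquantale (sub_corestrict f HP).
Proof.
  intros [Fsup [Fmul Finv]]; split; [| split]; intros; apply sub_eq; simpl; auto.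
  rewrite Fsup; symmetry; apply (sup_img_img _ (sub_corestrict f HP)).
Qed.

Section Unit.
Variables (k : qcat) (u : Q) (Pu : P u).
Hypothesis Hu : cat_unit k Q u.

Lemma sub_cat_unit : cat_unit k subquantale (exist P u Pu).
Proof.
  destruct k; simpl in *.
  - intro a; split; apply sub_eq, Hu.
  - apply sub_eq, le_antisym; simpl.
    + apply sup_ub; exists (exist P u Pu); auto.
    + rewrite Hu; apply le_top.
Qed.

Lemma sub_cat_obj : cat_obj k Q -> cat_obj k subquantale.
Proof.
  intro HQ; apply (cat_obj_of_unit _ _ _ sub_cat_unit), sub_eq, (cat_unit_idem k Q u HQ Hu).
Qed.

Lemma sub_incl_cat_hom : cat_hom k subquantale Q (@proj1_sig Q P).
Proof.
  apply cat_homI; [exact sub_incl_hom |]; intros e e' He He'.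
  rewrite (cat_unit_unique _ _ _ _ He sub_cat_unit); exact (cat_unit_unique _ _ _ _ Hu He').
Qed.

Lemma sub_corestrict_cat_hom (R : quantale) (f : R -> Q) (HP : forall x, P (f x)) :
  cat_hom k R Q f -> cat_hom k R subquantale (sub_corestrict f HP).
Proof.
  intro Hf; apply cat_homI; [apply sub_corestrict_hom, Hf |]; intros e e' He He'.
  rewrite (cat_unit_unique _ _ _ _ He' sub_cat_unit); apply sub_eq; simpl.
  exact (cat_hom_unit _ _ _ _ _ _ Hf He Hu).
Qed.
End Unit.
End Subquantale.

Lemma colimit_ind k (d : diagram k) (C : quantale) (c : forall i, D_obj d i -> C)
    (P : C -> Prop) :
  is_colimit d C c ->
  (forall S, (forall x, S x -> P x) -> P (sup S)) ->
  (forall x y, P x -> P y -> P (mul x y)) ->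
  (forall x, P x -> P (inv x)) ->
  (forall e, cat_unit k C e -> P e) ->
  (forall i a, P (c i a)) ->
  forall x, P x.
Proof.
  intros [[HC [Hc Hcompat]] Huniv] Psup Pmul Pinv Punit Pimg x.
  destruct (cat_obj_has_unit k C HC) as [u Hu].
  set (Sub := subquantale C P Psup Pmul Pinv).
  set (cS := fun i => sub_corestrict C P Psup Pmul Pinv (c i) (Pimg i)).
  assert (Hcocone : is_cocone d Sub cS).
  { split; [| split].
    - exact (sub_cat_obj _ _ _ _ _ k u (Punit u Hu) Hu HC).
    - intro i; exact (sub_corestrict_cat_hom _ _ _ _ _ k u (Punit u Hu) Hu _ _ _ (Hc i)).
    - intros i j v a; apply sub_eq, Hcompat. }
  destruct (Huniv Sub cS Hcocone) as [[h [Hh Hhc]] _].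
  assert (Hsplit : cat_hom k C C (fun y => proj1_sig (h y))).
  { apply (cat_hom_comp _ _ Sub); [apply Hcocone | exact Hh |].
    exact (sub_incl_cat_hom _ _ _ _ _ k u (Punit u Hu) Hu). }
  destruct (Huniv C c (conj HC (conj Hc Hcompat))) as [_ Hunique].
  rewrite <- (Hunique _ _ Hsplit (fun i a => f_equal (@proj1_sig C P) (Hhc i a))
                (cat_hom_id k C) (fun _ _ => eq_refl) x).
  exact (proj2_sig (h x)).
Qed.

Section IdealClosure.
Variable L : quantale.
Implicit Types (G I : L -> Prop).

Definition ideal_closure G : L -> Prop :=
  fun y => exists l, (forall z, In z l -> G z) /\ le y (lsup l).

Lemma ideal_closure_ideal G : is_ideal (ideal_closure G).
Proof.
  split; [| split].
  - exists nil; split; [contradiction | apply bot_le].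
  - intros x y Hxy [l [Hl Hy]]; exists l; split; [exact Hl | eapply le_trans; eassumption].
  - intros x y [l1 [Hl1 Hx]] [l2 [Hl2 Hy]]; exists (l1 ++ l2); split.
    + intros z [Hz | Hz]%in_app_or; auto.
    + rewrite lsup_app; apply join_le; eauto using le_trans, le_join_l, le_join_r.
Qed.

Lemma ideal_closure_incl G z : G z -> ideal_closure G z.
Proof.
  intro Hz; exists (z :: nil); split; [intros w [<- | []]; exact Hz | apply lsup_ub; left; auto].
Qed.

Lemma ideal_closure_least G I : is_ideal I -> (forall z, G z -> I z) ->
  forall y, ideal_closure G y -> I y.
Proof.
  intros HI HG y [l [Hl Hy]]; apply (proj1 (proj2 HI)) with (lsup l); [exact Hy |].
  apply ideal_lsup; auto.
Qed.
End IdealClosure.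

Section IdealQuantale.
Variable L : quantale.
Hypothesis HL : is_locale L.

Definition ideal_elt : Type := {I : L -> Prop | is_ideal I}.

Lemma ideal_eq (I J : ideal_elt) : (forall y, proj1_sig I y <-> proj1_sig J y) -> I = J.
Proof.
  destruct I as [I HI], J as [J HJ]; simpl; intro H.
  apply subset_eq_compat, functional_extensionality; intro y.
  apply propositional_extensionality, H.
Qed.

Definition ideal_sup (T : ideal_elt -> Prop) : ideal_elt :=
  exist _ (ideal_closure L (fun z => exists J, T J /\ proj1_sig J z)) (ideal_closure_ideal L _).

Lemma ideal_meet_ideal (I J : ideal_elt) : is_ideal (fun y => proj1_sig I y /\ proj1_sig J y).
Proof.
  destruct I as [I [I0 [I1 I2]]], J as [J [J0 [J1 J2]]]; split; [| split]; simpl; firstorder.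
Qed.

Definition ideal_meet (I J : ideal_elt) : ideal_elt := exist _ _ (ideal_meet_ideal I J).

Lemma ideal_meet_comm (I J : ideal_elt) : ideal_meet I J = ideal_meet J I.
Proof. apply ideal_eq; simpl; tauto. Qed.

(* Distributivity of the locale [L] is what makes meets of ideals distribute over joins. *)
Lemma ideal_meet_sup_l (I : ideal_elt) (T : ideal_elt -> Prop) :
  ideal_meet I (ideal_sup T) = ideal_sup (img (ideal_meet I) T).
Proof.
  apply ideal_eq; intro y; simpl; split.
  - intros [Hy [l [Hl Hyl]]]; exists (map (mul y) l); split.
    + intros w [z [<- Hz]]%in_map_iff.
      destruct (Hl z Hz) as [J [HJ HJz]]; exists (ideal_meet I J); split; [exists J; auto |].
      split; [apply (proj1 (proj2 (proj2_sig I))) with y; [apply mul_le_l, HL | exact Hy] |].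
      apply (proj1 (proj2 (proj2_sig J))) with z; [apply mul_le_r, HL | exact HJz].
    + rewrite <- (sup_preserving_lsup _ _ _ (mul_l_sup_preserving L y)).
      apply le_mul; [exact HL | apply le_refl | exact Hyl].
  - intro Hy; split.
    + apply (ideal_closure_least _ _ _ (proj2_sig I)) with (2 := Hy).
      intros z [J' [[J [_ ->]] [Hz _]]]; exact Hz.
    + apply (ideal_closure_least _ _ _ (ideal_closure_ideal _ _)) with (2 := Hy).
      intros z [J' [[J [HJ ->]] [_ Hz]]]; apply ideal_closure_incl; eauto.
Qed.

Definition ideal_quantale : quantale.
Proof.
  refine {| car := ideal_elt;
            le I J := forall y, proj1_sig I y -> proj1_sig J y;
            sup := ideal_sup; mul := ideal_meet; inv I := I |}.
  - auto.
  - auto.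
  - intros I J HIJ HJI; apply ideal_eq; split; auto.
  - intros T I HI y Hy; apply ideal_closure_incl; eauto.
  - intros T J HJ; apply ideal_closure_least; [apply (proj2_sig J) |].
    intros z [I [HI Hz]]; exact (HJ I HI z Hz).
  - intros I J K; apply ideal_eq; simpl; tauto.
  - exact ideal_meet_sup_l.
  - intros I T; rewrite ideal_meet_comm, ideal_meet_sup_l.
    f_equal; apply functional_extensionality; intro J.
    apply propositional_extensionality; split; intros [K [HK ->]]; exists K;
      rewrite ideal_meet_comm; auto.
  - reflexivity.
  - apply ideal_meet_comm.
  - intro T; f_equal; apply functional_extensionality; intro I.
    apply propositional_extensionality; split; [intro HI; exists I; auto | intros [J [HJ ->]]; exact HJ].
Defined.

Definition ideal_full : ideal_quantale :=
  exist is_ideal (fun _ => True) (conj I (conj (fun _ _ _ _ => I) (fun _ _ _ _ => I))).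

Lemma ideal_full_cat_unit k : cat_unit k ideal_quantale ideal_full.
Proof.
  destruct k; simpl.
  - intro I; split; apply ideal_eq; simpl; tauto.
  - apply ideal_eq; simpl; split; [intros _ | auto].
    apply ideal_closure_incl; exists ideal_full; simpl; auto.
Qed.

Lemma ideal_quantale_cat_obj k : cat_obj k ideal_quantale.
Proof.
  apply (cat_obj_of_unit _ _ _ (ideal_full_cat_unit k)), ideal_eq; simpl; tauto.
Qed.
End IdealQuantale.

Definition approx_set {D L : quantale} (f : D -> L) (a : D) : L -> Prop :=
  fun y => exists x, well_inside x a /\ le y (f x).

Section Approx.
Variables (D L : quantale) (f : D -> L).
Hypotheses (HD : is_locale D) (Hf : inv_qhom D L f).

Lemma approx_set_ideal a : is_ideal (approx_set f a).
Proof.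
  split; [| split].
  - exists (bot D); split; [apply well_inside_bot, HD | apply bot_le].
  - intros x y Hxy [z [Hz Hy]]; exists z; split; [exact Hz | eapply le_trans; eassumption].
  - intros x y [z1 [H1 Hx]] [z2 [H2 Hy]]; exists (join z1 z2).
    split; [apply well_inside_join; assumption |].
    rewrite (sup_preserving_join _ _ _ (proj1 Hf)).
    apply join_le; eauto using le_trans, le_join_l, le_join_r.
Qed.

Lemma approx_set_mono a b y : le a b -> approx_set f a y -> approx_set f b y.
Proof.
  intros Hab [x [Hx Hy]]; exists x; split; [| exact Hy].
  exact (well_inside_mono _ HD x x a b (le_refl _ x) Hx Hab).
Qed.

Hypotheses (HL : is_locale L) (Hf_top : f (top D) = top L)
  (HDc : compact D) (HDr : regular D).

Definition approx_ideal (a : D) : ideal_quantale L HL :=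
  exist _ (approx_set f a) (approx_set_ideal a).

Lemma approx_ideal_hom : inv_qhom D (ideal_quantale L HL) approx_ideal.
Proof.
  split; [| split].
  - intro T; apply ideal_eq; intro y; simpl; split.
    + intros [x [Hx Hy]].
      set (G := fun z => exists J, img approx_ideal T J /\ proj1_sig J z).
      assert (HI : is_ideal (fun z => ideal_closure L G (f z))).
      { apply ideal_preimage; [exact (proj1 Hf) | apply ideal_closure_ideal]. }
      apply (proj1 (proj2 (ideal_closure_ideal L G))) with (f x); [exact Hy |].
      apply (well_inside_sup_ideal _ HD HDc HDr _ T HI); [| exact Hx].
      intros t z Ht Hz; apply ideal_closure_incl; exists (approx_ideal t).
      split; [exists t; auto | exists z; split; [exact Hz | apply le_refl]].
    + apply ideal_closure_least; [apply approx_set_ideal |].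
      intros z [J [[t [Ht ->]] Hz]]; apply approx_set_mono with t; [apply sup_ub, Ht | exact Hz].
  - intros a b; apply ideal_eq; intro y; simpl; split.
    + intro Hy; split; apply approx_set_mono with (mul a b); auto;
        [apply mul_le_l | apply mul_le_r]; apply HD.
    + intros [[x1 [H1 Hy1]] [x2 [H2 Hy2]]]; exists (mul x1 x2).
      split; [apply well_inside_mul; assumption |].
      rewrite (proj1 (proj2 Hf)); apply le_mul; assumption.
  - intro a; rewrite (proj1 (proj2 HD) a); reflexivity.
Qed.

Lemma approx_ideal_top : approx_ideal (top D) = ideal_full L HL.
Proof.
  apply ideal_eq; intro y; simpl; split; [auto | intros _].
  exists (top D); split; [apply well_inside_top, HD | rewrite Hf_top; apply le_top].
Qed.

Lemma approx_ideal_cat_hom k : cat_hom k D (ideal_quantale L HL) approx_ideal.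
Proof.
  apply cat_homI; [exact approx_ideal_hom |]; intros e e' He He'.
  rewrite (cat_unit_unique _ _ _ _ He (locale_cat_unit k D HD)),
    (cat_unit_unique _ _ _ _ He' (ideal_full_cat_unit L HL k)).
  exact approx_ideal_top.
Qed.
End Approx.

Lemma approx_set_natural (D D' L : quantale) (g : D -> D') (f : D' -> L) (f' : D -> L)
    (HD : is_locale D) (HDr : regular D)
    (HD' : is_locale D') (HD'c : compact D') (HD'r : regular D')
    (Hg : inv_qhom D D' g) (Hg_top : g (top D) = top D')
    (Hf : inv_qhom D' L f) (Hf' : inv_qhom D L f') (Hfg : forall x, f' x = f (g x)) a y :
  approx_set f' a y <-> approx_set f (g a) y.
Proof.
  split.
  - intros [x [Hx Hy]]; exists (g x); split; [| rewrite <- Hfg; exact Hy].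
    exact (hom_well_inside _ _ g HD Hg Hg_top HD' _ _ Hx).
  - intros [x [Hx Hy]].
    apply (proj1 (proj2 (approx_set_ideal _ _ f' HD Hf' a))) with (f x); [exact Hy |].
    rewrite (hom_regular _ _ g Hg HDr a) in Hx.
    refine (well_inside_sup_ideal _ HD' HD'c HD'r (fun z => approx_set f' a (f z)) _
              (ideal_preimage _ _ f _ (proj1 Hf) (approx_set_ideal _ _ f' HD Hf' a)) _ x Hx).
    intros t z [a' [Ha' ->]] Hz; exists a'; split; [exact Ha' |].
    rewrite Hfg; apply (sup_preserving_mono _ _ _ (proj1 Hf)), (well_inside_le _ HD' _ _ Hz).
Qed.

Section Colimit.
Variables (k : qcat) (d : diagram k) (C : quantale) (c : forall i, D_obj d i -> C).
Hypotheses (hD : forall i, compact_regular_locale (D_obj d i)) (Hcol : is_colimit d C c).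

Let D_locale i : is_locale (D_obj d i) := proj1 (hD i).
Let D_compact i : compact (D_obj d i) := proj1 (proj2 (hD i)).
Let D_regular i : regular (D_obj d i) := proj2 (proj2 (hD i)).
Let C_obj : cat_obj k C := proj1 (proj1 Hcol).
Let c_cat_hom i : cat_hom k _ _ (c i) := proj1 (proj2 (proj1 Hcol)) i.
Let c_hom i : inv_qhom _ _ (c i) := proj1 (c_cat_hom i).

Lemma colimit_below_unit e : cat_unit k C e ->
  forall x, le x e /\ mul x e = x /\ mul e x = x.
Proof.
  intro He; apply (colimit_ind _ _ _ _ _ Hcol).
  - intros S HS; split; [| split].
    + apply sup_least; intros x Hx; apply HS, Hx.
    + rewrite mul_r_sup_preserving; apply sup_ext; intro y; split.
      * intros [x [Hx ->]]; rewrite (proj1 (proj2 (HS x Hx))); exact Hx.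
      * intro Hy; exists y; split; [exact Hy | symmetry; apply HS, Hy].
    + rewrite mul_l_sup_preserving; apply sup_ext; intro y; split.
      * intros [x [Hx ->]]; rewrite (proj2 (proj2 (HS x Hx))); exact Hx.
      * intro Hy; exists y; split; [exact Hy | symmetry; apply HS, Hy].
  - intros x y [Hx1 [Hx2 Hx3]] [Hy1 [Hy2 Hy3]]; split; [| split].
    + rewrite <- (cat_unit_idem _ _ _ C_obj He); apply mul_le_mono; assumption.
    + rewrite mul_assoc, Hy2; reflexivity.
    + rewrite <- mul_assoc, Hx3; reflexivity.
  - intros x [Hx1 [Hx2 Hx3]]; rewrite <- (inv_cat_unit _ _ _ He); split; [| split].
    + apply inv_le_mono, Hx1.
    + rewrite <- inv_mul, Hx3; reflexivity.
    + rewrite <- inv_mul, Hx2; reflexivity.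
  - intros e' He'; rewrite (cat_unit_unique _ _ _ _ He' He).
    split; [apply le_refl | split; apply (cat_unit_idem _ _ _ C_obj He)].
  - intros i a.
    rewrite <- (cat_hom_unit _ _ _ _ _ _ (c_cat_hom i) (locale_cat_unit k _ (D_locale i)) He).
    rewrite <- !(proj1 (proj2 (c_hom i))); split; [| split].
    + apply (sup_preserving_mono _ _ _ (proj1 (c_hom i))), le_top.
    + f_equal; apply (D_locale i).
    + f_equal; apply (D_locale i).
Qed.

Lemma colimit_cat_unit_top e : cat_unit k C e -> e = top C.
Proof. intro He; apply le_antisym; [apply le_top | apply (colimit_below_unit e He)]. Qed.

Lemma colimit_top_unit : is_unit C (top C).
Proof.
  destruct (cat_obj_has_unit k C C_obj) as [e He].
  rewrite <- (colimit_cat_unit_top e He); intro x; split; apply (colimit_below_unit e He x).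
Qed.

Lemma colimit_map_top i : c i (top _) = top C.
Proof.
  destruct (cat_obj_has_unit k C C_obj) as [e He]; rewrite <- (colimit_cat_unit_top e He).
  exact (cat_hom_unit _ _ _ _ _ _ (c_cat_hom i) (locale_cat_unit k _ (D_locale i)) He).
Qed.

(* Write both elements as joins of images of well-inside elements (regularity)
   and swap each pair of factors using their complements. *)
Lemma colimit_images_swap_le i j (a : D_obj d i) (b : D_obj d j) :
  le (mul (c j b) (c i a)) (mul (c i a) (c j b)).
Proof.
  rewrite (hom_regular _ _ _ (c_hom j) (D_regular j) b) at 1.
  rewrite (hom_regular _ _ _ (c_hom i) (D_regular i) a) at 1.
  apply mul_sup_le; intros p x' [b' [Hb' ->]] [a' [Ha' ->]].
  destruct (hom_well_inside_complement _ _ _ (D_locale i) (c_hom i) (colimit_map_top i) _ _ Ha')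
    as (s & Hs & _ & Hjs).
  destruct (hom_well_inside_complement _ _ _ (D_locale j) (c_hom j) (colimit_map_top j) _ _ Hb')
    as (q & _ & Hq & Hjq).
  exact (mul_swap_le_of_complements _ colimit_top_unit _ _ _ _ s q Hs Hjs Hq Hjq).
Qed.

Lemma colimit_images_commute i j (a : D_obj d i) (b : D_obj d j) : commute (c i a) (c j b).
Proof. apply le_antisym; apply colimit_images_swap_le. Qed.

Lemma colimit_commute_images (x : C) i (a : D_obj d i) : commute x (c i a).
Proof.
  revert x i a; apply (colimit_ind _ _ _ _ (fun x => forall i a, commute x (c i a)) Hcol).
  - intros S HS i a; apply commute_sup; intros s Hs; apply HS, Hs.
  - intros x y Hx Hy i a; apply commute_mul; auto.
  - intros x Hx i a; apply commute_inv; rewrite <- (proj2 (proj2 (c_hom i))); apply Hx.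
  - intros e He i a; rewrite (colimit_cat_unit_top e He); apply commute_unit, colimit_top_unit.
  - intros j b i a; apply colimit_images_commute.
Qed.

Lemma colimit_commutative (x y : C) : commute x y.
Proof.
  revert x y; apply (colimit_ind _ _ _ _ (fun x => forall y : C, commute x y) Hcol).
  - intros S HS y; apply commute_sup; intros s Hs; apply HS, Hs.
  - intros x y Hx Hy z; apply commute_mul; auto.
  - intros x Hx y; apply commute_inv, Hx.
  - intros e He y; rewrite (colimit_cat_unit_top e He); apply commute_unit, colimit_top_unit.
  - intros i a y; symmetry; apply colimit_commute_images.
Qed.

Lemma colimit_inv_idem (x : C) : inv x = x /\ mul x x = x.
Proof.
  revert x; apply (colimit_ind _ _ _ _ _ Hcol).
  - intros S HS; split.
    + rewrite inv_sup_preserving; apply sup_ext; intro y; split.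
      * intros [x [Hx ->]]; rewrite (proj1 (HS x Hx)); exact Hx.
      * intro Hy; exists y; split; [exact Hy | symmetry; apply HS, Hy].
    + apply le_antisym.
      * apply mul_sup_le; intros s t Hs _.
        eapply le_trans; [apply mul_le_l, colimit_top_unit | apply sup_ub, Hs].
      * apply sup_least; intros s Hs; rewrite <- (proj2 (HS s Hs)).
        apply mul_le_mono; apply sup_ub, Hs.
  - intros x y [Hx1 Hx2] [Hy1 Hy2]; split.
    + rewrite inv_mul, Hx1, Hy1; apply colimit_commutative.
    + rewrite mul_assoc, <- (mul_assoc _ y x), (colimit_commutative y x), mul_assoc, Hy2,
        <- mul_assoc, Hx2; reflexivity.
  - intros x [Hx1 Hx2]; rewrite Hx1; auto.
  - intros e He; rewrite (colimit_cat_unit_top e He); split; [apply inv_top | apply colimit_top_unit].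
  - intros i a; rewrite <- (proj2 (proj2 (c_hom i))), <- (proj1 (proj2 (c_hom i))).
    rewrite (proj1 (proj2 (D_locale i)) a), (locale_mul_idem _ (D_locale i)); auto.
Qed.

Lemma colimit_is_locale : is_locale C.
Proof.
  apply is_locale_of_idempotent;
    [exact colimit_top_unit | intro x; apply colimit_inv_idem ..].
Qed.

Lemma colimit_regular : regular C.
Proof.
  pose proof colimit_is_locale as HCl.
  assert (Hle : forall x : C, le x (sup (fun w => well_inside w x))).
  { apply (colimit_ind _ _ _ _ _ Hcol).
    - intros S HS; apply sup_least; intros s Hs; eapply le_trans; [apply HS, Hs |].
      apply sup_least; intros w Hw; apply sup_ub.
      exact (well_inside_mono _ HCl w w s _ (le_refl _ w) Hw (sup_ub _ _ _ Hs)).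
    - intros x y Hx Hy; eapply le_trans; [apply mul_le_mono; eassumption |].
      apply mul_sup_le; intros w1 w2 Hw1 Hw2; apply sup_ub, well_inside_mul; assumption.
    - intros x Hx; rewrite (proj1 (proj2 HCl) x); exact Hx.
    - intros e He; rewrite (colimit_cat_unit_top e He); apply sup_ub, well_inside_top, HCl.
    - intros i a; rewrite (hom_regular _ _ _ (c_hom i) (D_regular i) a) at 1.
      apply sup_least; intros w [a' [Ha' ->]]; apply sup_ub.
      exact (hom_well_inside _ _ _ (D_locale i) (c_hom i) (colimit_map_top i) HCl _ _ Ha'). }
  intro x; apply le_antisym; [apply Hle | apply sup_least; intros w; apply well_inside_le, HCl].
Qed.

Definition colimit_approx i : D_obj d i -> ideal_quantale C colimit_is_locale :=
  approx_ideal (D_obj d i) C (c i) (D_locale i) (c_hom i) colimit_is_locale.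

Lemma colimit_approx_cocone : is_cocone d (ideal_quantale C colimit_is_locale) colimit_approx.
Proof.
  split; [apply ideal_quantale_cat_obj | split].
  - intro i; apply approx_ideal_cat_hom; auto using colimit_map_top.
  - intros i j v x; apply ideal_eq; intro y; simpl; symmetry.
    pose proof (D_map_hom _ d _ _ v) as Hv.
    apply (approx_set_natural _ _ _ (D_map d v) (c j) (c i) (D_locale i) (D_regular i)
             (D_locale j) (D_compact j) (D_regular j) (proj1 Hv)); [| apply c_hom.. |].
    + exact (cat_hom_unit _ _ _ _ _ _ Hv (locale_cat_unit k _ (D_locale i))
               (locale_cat_unit k _ (D_locale j))).
    + intro z; symmetry; apply (proj2 (proj2 (proj1 Hcol))).
Qed.

Lemma colimit_approx_mediator_le (h : C -> ideal_quantale C colimit_is_locale) :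
  cat_hom k _ _ h -> (forall i a, h (c i a) = colimit_approx i a) ->
  forall x y, proj1_sig (h x) y -> le y x.
Proof.
  intros Hh Hha; apply (colimit_ind _ _ _ _ (fun x => forall y, proj1_sig (h x) y -> le y x) Hcol).
  - intros S HS y; rewrite (proj1 (proj1 Hh)); intros [l [Hl Hy]].
    eapply le_trans; [exact Hy |]; apply lsup_le; intros z Hz.
    destruct (Hl z Hz) as [J [[s [Hs ->]] Hzs]].
    eapply le_trans; [apply (HS s Hs z Hzs) | apply sup_ub, Hs].
  - intros x1 x2 Hx1 Hx2 y; rewrite (proj1 (proj2 (proj1 Hh))); intros [H1 H2].
    apply le_mul; auto using colimit_is_locale.
  - intros x Hx y; rewrite (proj2 (proj2 (proj1 Hh))), (proj1 (proj2 colimit_is_locale) x).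
    exact (Hx y).
  - intros e He y _; rewrite (colimit_cat_unit_top e He); apply le_top.
  - intros i x y; rewrite Hha; intros [x' [Hx' Hy]]; eapply le_trans; [exact Hy |].
    apply (sup_preserving_mono _ _ _ (proj1 (c_hom i))), (well_inside_le _ (D_locale i) _ _ Hx').
Qed.

Lemma colimit_compact : compact C.
Proof.
  intros S Htop.
  destruct (proj2 Hcol _ _ colimit_approx_cocone) as [[h [Hh Hha]] _].
  assert (Hh_top : h (top C) = ideal_full C colimit_is_locale).
  { exact (cat_hom_unit _ _ _ _ _ _ Hh (locale_cat_unit k C colimit_is_locale)
             (ideal_full_cat_unit C colimit_is_locale k)). }
  assert (Htop_in : proj1_sig (h (sup S)) (top C)) by (rewrite <- Htop, Hh_top; exact I).
  rewrite (proj1 (proj1 Hh)) in Htop_in.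
  assert (Hcover : ideal_closure C S (top C)).
  { apply (ideal_closure_least _ _ _ (ideal_closure_ideal C S)) with (2 := Htop_in).
    intros z [J [[s [Hs ->]] Hz]].
    apply (proj1 (proj2 (ideal_closure_ideal C S))) with s;
      [exact (colimit_approx_mediator_le h Hh Hha s z Hz) | apply ideal_closure_incl, Hs]. }
  destruct Hcover as [F [HF Htop_le]]; exists F; split; [exact HF |].
  apply le_antisym; [exact Htop_le | apply le_top].
Qed.
End Colimit.

Theorem corollary4p4 :
  forall (k : qcat) (d : diagram k),
    (forall i : J_obj d, compact_regular_locale (D_obj d i)) ->
    forall (C : quantale) (c : forall i, D_obj d i -> C),
      is_colimit d C c ->
      compact_regular_locale C.
Proof.
  intros k d hD C c Hcol.
  split; [| split]; [eapply colimit_is_locale | eapply colimit_compact | eapply colimit_regular];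
    eassumption.
Qed.
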